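(* Let $\Omega\subset\mathbb{R}^2$ be bounded, open, connected with $0\in\Omega$ and $\sigma(\Omega)=\Omega$, where $\sigma(x_1,x_2)=(x_1,-x_2)$. Let $\lambda_N^0$ be an eigenvalue of $(E_0)$ and let $\varphi\in E(\lambda_N^0)\setminus\{0\}$. Let $\mathfrak S u=\bar u\circ\sigma$. Then: (i) if $\varphi=-\mathfrak S\varphi$, then $\omega(\varphi)=0$; (ii) if $\varphi=\mathfrak S\varphi$, then $\omega(\varphi)=\frac{\pi}{k(\varphi)}$; (iii) if $\omega(\varphi)\ne\frac{\pi}{k(\varphi)}$, then $k(\varphi-\mathfrak S\varphi)=k(\varphi)$; (iv) if $\omega(\varphi)\ne0$, then $k(\varphi+\mathfrak S\varphi)=k(\varphi)$.
   Context: $A_0(x)=\frac12\big(-\frac{x_2}{|x|^2},\frac{x_1}{|x|^2}\big)$; $H^{1,0}_0(\Omega,\mathbb{C})$ is the closure of $C_c^\infty(\Omega\setminus\{0\},\mathbb{C})$ in the completion of $\{u\in H^1\cap C^\infty(\Omega,\mathbb{C}):u$ vanishes near $0\}$ under the norm $(\|\nabla u\|^2_{L^2}+\|u\|^2_{L^2}+\|u/|x|\|^2_{L^2})^{1/2}$; $u$ is an eigenfunction of $(E_0)$ with eigenvalue $\lambda$ if $u\in H^{1,0}_0\setminus\{0\}$ and $\int_\Omega(i\nabla u+A_0u)\cdot\overline{(i\nabla v+A_0v)}=\lambda\int_\Omega u\bar v$ for all $v\in H^{1,0}_0$. A function $u$ is K-real if $e^{-it/2}u(r\cos t,r\sin t)$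 is real-valued; $E(\lambda_N^0)$ is the real vector space of K-real eigenfunctions with eigenvalue $\lambda_N^0$ (together with $0$); under $\sigma(\Omega)=\Omega$ it is invariant under $\mathfrak S$. It is known that for every $u\in E(\lambda_N^0)\setminus\{0\}$ there are unique $k(u)\in\mathbb{N}$ odd, $\beta(u)\in\mathbb{R}\setminus\{0\}$, $\omega(u)\in[0,\frac{2\pi}{k(u)})$ with $r^{-k(u)/2}u(r\cos t,r\sin t)\to\beta(u)e^{it/2}\sin(\frac{k(u)}2(t-\omega(u)))$ in $C^{1,\tau}([0,2\pi],\mathbb{C})$ as $r\to0^+$, for all $\tau\in(0,1)$. *)

(* R : realType, points of R^2 are pairs (R * R),
   complex numbers are encoded as pairs (Re, Im) : R * R. *)
From mathcomp Require Import all_boot all_order all_algebra.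
From mathcomp Require Import all_classical all_reals all_analysis.
Set Implicit Arguments. Unset Strict Implicit. Unset Printing Implicit Defensive.
Import Order.TTheory GRing.Theory Num.Theory numFieldNormedType.Exports.
Local Open Scope classical_set_scope.
Local Open Scope ring_scope.

Section AB.
Variable R : realType.
Local Notation pt := (R * R)%type.

Definition leb2 := product_measure1 (@lebesgue_measure R) (@lebesgue_measure R).

Definition sq2 (x : pt) : R := x.1 ^+ 2 + x.2 ^+ 2.
Definition sigma (x : pt) : pt := (x.1, - x.2).
Definition A0 (x : pt) : pt := ((- x.2) / (2 * sq2 x), x.1 / (2 * sq2 x)).

Definition caddf (u v : pt -> R * R) : pt -> R * R :=
  fun x => ((u x).1 + (v x).1, (u x).2 + (v x).2).
Definition cnegf (u : pt -> R * R) : pt -> R * R := fun x => (- (u x).1, - (u x).2).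
Definition csubf (u v : pt -> R * R) : pt -> R * R := caddf u (cnegf v).
Definition Sfrak (u : pt -> R * R) : pt -> R * R :=
  fun x => ((u (sigma x)).1, - (u (sigma x)).2).

Fixpoint Cn (n : nat) (f : pt -> R) : Prop :=
  match n with
  | 0 => continuous f
  | n'.+1 => continuous f /\ (forall x (v : pt), derivable f x v) /\
             (forall v : pt, Cn n' (fun x => 'D_v f x))
  end.
Definition smooth (f : pt -> R) : Prop := forall n, Cn n f.

Definition test_fun (Omega : set pt) (f : pt -> R) : Prop :=
  smooth f /\ exists K : set pt, [/\ compact K, K `<=` Omega `\ (0, 0) &
                                  forall x, ~ K x -> f x = 0].

Definition grad (f : pt -> R) (x : pt) : pt := ('D_(1, 0) f x, 'D_(0, 1) f x).

Definition sqd (a b : pt) : R := (a.1 - b.1) ^+ 2 + (a.2 - b.2) ^+ 2.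

(* u (complex, = (Re u, Im u)) belongs to H^{1,0}_0(Omega, C), with (weak)
   gradient G x = (grad Re u x, grad Im u x): u is the limit, in the norm
   (||grad .||^2 + ||.||^2 + ||./|x| ||^2)^{1/2}, of a sequence of
   C_c^infty(Omega\{0}, C) functions. *)
Definition H10 (Omega : set pt) (u : pt -> R * R) (G : pt -> pt * pt) : Prop :=
  [/\ measurable_fun Omega (fun x => (u x).1) /\ measurable_fun Omega (fun x => (u x).2),
      measurable_fun Omega (fun x => (G x).1.1) /\ measurable_fun Omega (fun x => (G x).1.2),
      measurable_fun Omega (fun x => (G x).2.1) /\ measurable_fun Omega (fun x => (G x).2.2) &
   exists phi : nat -> pt -> R * R,
     (forall n, test_fun Omega (fun x => (phi n x).1) /\ test_fun Omega (fun x => (phi n x).2)) /\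
     (fun n => (\int[leb2]_(x in Omega)
         ((sqd (phi n x) (u x))
          + sqd (grad (fun y => (phi n y).1) x) (G x).1
          + sqd (grad (fun y => (phi n y).2) x) (G x).2
          + sqd (phi n x) (u x) / sq2 x)%:E)%E) @ \oo --> 0%E].

Definition dot (a b : pt) : R := a.1 * b.1 + a.2 * b.2.

(* i grad u + A0 u = P + i Q  with u = a + i b *)
Definition Pm (u : pt -> R * R) (G : pt -> pt * pt) (x : pt) : pt :=
  ((A0 x).1 * (u x).1 - (G x).2.1, (A0 x).2 * (u x).1 - (G x).2.2).
Definition Qm (u : pt -> R * R) (G : pt -> pt * pt) (x : pt) : pt :=
  ((G x).1.1 + (A0 x).1 * (u x).2, (G x).1.2 + (A0 x).2 * (u x).2).

(* u is an eigenfunction of (E_0) with eigenvalue lam.  u is taken to be the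
   continuous representative on Omega \ {0}. *)
Definition eigenfunction (Omega : set pt) (lam : R) (u : pt -> R * R) : Prop :=
  (forall x, Omega x -> x <> (0, 0) ->
     {for x, continuous (fun y => (u y).1)} /\ {for x, continuous (fun y => (u y).2)}) /\
  exists G, [/\ H10 Omega u G,
    (\int[leb2]_(x in Omega) ((u x).1 ^+ 2 + (u x).2 ^+ 2)%:E != 0)%E &
    forall v Gv, H10 Omega v Gv ->
      (\int[leb2]_(x in Omega) (dot (Pm u G x) (Pm v Gv x) + dot (Qm u G x) (Qm v Gv x))%:E
        = lam%:E * \int[leb2]_(x in Omega) ((u x).1 * (v x).1 + (u x).2 * (v x).2)%:E)%E /\
      (\int[leb2]_(x in Omega) (dot (Qm u G x) (Pm v Gv x) - dot (Pm u G x) (Qm v Gv x))%:E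
        = lam%:E * \int[leb2]_(x in Omega) ((u x).2 * (v x).1 - (u x).1 * (v x).2)%:E)%E].

(* K-real: e^{-it/2} u(r cos t, r sin t) is real *)
Definition K_real (Omega : set pt) (u : pt -> R * R) : Prop :=
  forall r t, 0 < r -> Omega (r * cos t, r * sin t) ->
    cos (t / 2) * (u (r * cos t, r * sin t)).2
      - sin (t / 2) * (u (r * cos t, r * sin t)).1 = 0.

Definition zero_on (Omega : set pt) (u : pt -> R * R) : Prop :=
  forall x, Omega x -> x <> (0, 0) -> u x = (0, 0).

Definition Eset (Omega : set pt) (lam : R) (u : pt -> R * R) : Prop :=
  zero_on Omega u \/ (eigenfunction Omega lam u /\ K_real Omega u).

Definition C1tau_small (tau eps : R) (h : R -> R) : Prop :=
  [/\ forall t, derivable h t 1,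
      forall t, 0 <= t <= 2 * pi -> `|h t| <= eps /\ `|derive1 h t| <= eps &
      forall s t, 0 <= s <= 2 * pi -> 0 <= t <= 2 * pi ->
        `|derive1 h s - derive1 h t| <= eps * `|s - t| `^ tau].

(* r^{-k/2} u(r cos t, r sin t) -> beta e^{it/2} sin(k/2 (t - omega))
   in C^{1,tau}([0,2pi], C) as r -> 0+, for all tau in (0,1) *)
Definition expansion (u : pt -> R * R) (k : nat) (beta omega : R) : Prop :=
  forall tau, 0 < tau < 1 -> forall eps, 0 < eps ->
  exists delta, 0 < delta /\ forall r, 0 < r < delta ->
    C1tau_small tau eps (fun t => r `^ (- (k%:R / 2)) * (u (r * cos t, r * sin t)).1
                                  - beta * cos (t / 2) * sin (k%:R / 2 * (t - omega))) /\
    C1tau_small tau eps (fun t => r `^ (- (k%:R / 2)) * (u (r * cos t, r * sin t)).2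
                                  - beta * sin (t / 2) * sin (k%:R / 2 * (t - omega))).

Definition asym_data (u : pt -> R * R) (k : nat) (beta omega : R) : Prop :=
  [/\ odd k, beta != 0, 0 <= omega < 2 * pi / k%:R & expansion u k beta omega].

End AB.

(* In polar coordinates Sfrak is the reflection t |-> 2 pi - t followed by complex
   conjugation.  For odd k it turns the leading term beta e^{it/2} sin(k/2 (t - omega))
   of phi into -beta e^{it/2} sin(k/2 (t + omega)), so phi - Sfrak phi and phi + Sfrak phi
   have leading terms 2 beta cos(k omega/2) e^{it/2} sin(k t/2) and
   2 beta sin(k omega/2) e^{it/2} sin(k/2 (t - pi/k)).  As k omega/2 lies in [0, pi),
   the first amplitude vanishes iff omega = pi/k and the second iff omega = 0; and if
   phi = -/+ Sfrak phi, then phi +/- Sfrak phi vanishes near 0, so its amplitude is 0. *)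

From mathcomp Require Import all_boot all_order all_algebra.
From mathcomp Require Import all_classical all_reals all_analysis.
From mathcomp Require Import ring lra.
Set Implicit Arguments.
Import Order.TTheory GRing.Theory Num.Theory numFieldNormedType.Exports.
Local Open Scope classical_set_scope.
Local Open Scope ring_scope.

Section Trigonometry.
Context {R : realType}.
Implicit Types (k : nat) (t x omega : R).

Lemma cos2pi_sub t : cos (2 * pi - t) = cos t.
Proof. by rewrite addrC mulr_natl cosD2pi cosN. Qed.

Lemma sin2pi_sub t : sin (2 * pi - t) = - sin t.
Proof. by rewrite addrC mulr_natl sinD2pi sinN. Qed.

Lemma cos_half_2pi_sub t : cos ((2 * pi - t) / 2) = - cos (t / 2).
Proof.
rewrite (_ : (2 * pi - t) / 2 = - (t / 2) + pi); last by field.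
by rewrite cosDpi cosN.
Qed.

Lemma sin_half_2pi_sub t : sin ((2 * pi - t) / 2) = sin (t / 2).
Proof.
rewrite (_ : (2 * pi - t) / 2 = - (t / 2) + pi); last by field.
by rewrite sinDpi sinN opprK.
Qed.

Lemma sinD_npi x (n : nat) : sin (x + n%:R * pi) = (-1) ^+ n * sin x.
Proof.
elim: n => [|n IH]; first by rewrite mul0r addr0 expr0 mul1r.
by rewrite -natr1 mulrDl mul1r addrA sinDpi IH exprS mulN1r mulNr.
Qed.

Lemma sin_odd_half_2pi_sub k t omega : odd k ->
  sin (k%:R / 2 * (2 * pi - t - omega)) = sin (k%:R / 2 * (t + omega)).
Proof.
move=> ok.
rewrite (_ : k%:R / 2 * (2 * pi - t - omega) = - (k%:R / 2 * (t + omega)) + k%:R * pi).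
  by rewrite sinD_npi sinN -signr_odd ok expr1 mulN1r opprK.
by field.
Qed.

Lemma sin_eq0_0pi x : 0 <= x < pi -> (sin x == 0) = (x == 0).
Proof.
case/andP; rewrite le_eqVlt => /predU1P[<- _|x0 xpi]; first by rewrite sin0 !eqxx.
by rewrite (gt_eqF x0) gt_eqF // sin_gt0_pi // x0.
Qed.

Lemma cos_eq0_0pi x : 0 <= x < pi -> (cos x == 0) = (x == pi / 2).
Proof.
move=> /andP[x0 xpi]; rewrite -cos_pihalf; apply/eqP/eqP => [|-> //].
by apply: cos_inj; rewrite in_itv /= ?x0 ?(ltW xpi) // divr_ge0 ?pi_ge0 //=; lra.
Qed.

Lemma half_phase_0pi k omega : (0 < k)%N -> 0 <= omega < 2 * pi / k%:R ->
  0 <= k%:R / 2 * omega < pi.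
Proof.
move=> k0 /andP[w0 w1]; have kR : 0 < k%:R :> R by rewrite ltr0n.
rewrite mulr_ge0 ?divr_ge0 //=.
by rewrite -ltr_pdivlMl ?divr_gt0 // invf_div mulrAC.
Qed.

Lemma sin_half_phase_eq0 k omega : (0 < k)%N -> 0 <= omega < 2 * pi / k%:R ->
  (sin (k%:R / 2 * omega) == 0) = (omega == 0).
Proof.
move=> k0 wI; have kR : k%:R != 0 :> R by rewrite pnatr_eq0 -lt0n.
by rewrite sin_eq0_0pi ?half_phase_0pi // !mulf_eq0 invr_eq0 (negbTE kR) pnatr_eq0.
Qed.

Lemma cos_half_phase_eq0 k omega : (0 < k)%N -> 0 <= omega < 2 * pi / k%:R ->
  (cos (k%:R / 2 * omega) == 0) = (omega == pi / k%:R).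
Proof.
move=> k0 wI; have kR : k%:R != 0 :> R by rewrite pnatr_eq0 -lt0n.
rewrite cos_eq0_0pi ?half_phase_0pi //; apply/eqP/eqP => [h|->]; last by field.
by rewrite -[omega](@mulKf _ (k%:R / 2)) ?h; [field | rewrite mulf_neq0].
Qed.

End Trigonometry.

Section C1tauSmall.
Context {R : realType} (tau : R).
Implicit Types (h g : R -> R).

Lemma C1tau_smallD e1 e2 h g : C1tau_small tau e1 h -> C1tau_small tau e2 g ->
  C1tau_small tau (e1 + e2) (h + g).
Proof.
move=> [dh bh hh] [dg bg hg]; split=> [t|t tI|s t sI tI].
- exact: derivableD.
- have [h1 h2] := bh t tI; have [g1 g2] := bg t tI.
  rewrite derive1E deriveD // -!derive1E.
  by split; rewrite (le_trans (ler_normD _ _)) // lerD.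
- rewrite !derive1E !deriveD // -!derive1E opprD addrACA mulrDl.
  by rewrite (le_trans (ler_normD _ _)) // lerD ?hh ?hg.
Qed.

Lemma C1tau_smallN e h : C1tau_small tau e h -> C1tau_small tau e (- h).
Proof.
move=> [dh bh hh]; split=> [t|t tI|s t sI tI].
- exact: derivableN.
- by rewrite derive1N // normrN /= normrN; apply: bh.
- by rewrite !derive1N // -opprD normrN; apply: hh.
Qed.

Lemma is_derive_2pi_sub (x : R) : is_derive x 1 (fun t : R => 2 * pi - t) (-1).
Proof.
have -> : (fun t : R => 2 * pi - t) = cst (2 * pi) - id by apply/funext.
by rewrite -[-1]sub0r; apply: is_deriveB.
Qed.

Lemma C1tau_small_2pi_sub e h : C1tau_small tau e h ->
  C1tau_small tau e (h \o (fun t => 2 * pi - t)).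
Proof.
move=> [dh bh hh].
have D (t : R) : is_derive t 1 (h \o (fun t => 2 * pi - t)) (derive1 h (2 * pi - t) * -1).
  apply: is_derive1_comp; last exact: is_derive_2pi_sub.
  by rewrite derive1E; apply: derivableP.
have I (t : R) : 0 <= t <= 2 * pi -> 0 <= 2 * pi - t <= 2 * pi by lra.
split=> [t|t tI|s t sI tI].
- by have [] := D t.
- by rewrite derive1E derive_val mulrN1 normrN; apply: bh; apply: I.
- rewrite !derive1E !derive_val !mulrN1 opprK addrC.
  by rewrite (_ : s - t = 2 * pi - t - (2 * pi - s)) ?hh ?I //; ring.
Qed.

End C1tauSmall.

Section ProfileExpansion.
Context {R : realType}.
Local Notation pt := (R * R)%type.
Implicit Types (u v : pt -> R * R) (a b c d : R -> R) (k : nat).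

(* [expansion u k beta omega] unfolds to the instance
   [a t = beta * cos (t / 2) * sin (k / 2 * (t - omega))],
   [b t = beta * sin (t / 2) * sin (k / 2 * (t - omega))]. *)
Definition profile_expansion u k a b : Prop :=
  forall tau, 0 < tau < 1 -> forall eps, 0 < eps ->
  exists delta, 0 < delta /\ forall r, 0 < r < delta ->
    C1tau_small tau eps (fun t => r `^ (- (k%:R / 2)) * (u (r * cos t, r * sin t)).1 - a t) /\
    C1tau_small tau eps (fun t => r `^ (- (k%:R / 2)) * (u (r * cos t, r * sin t)).2 - b t).

Lemma eq_profile_expansion u k a b c d : a =1 c -> b =1 d ->
  profile_expansion u k a b -> profile_expansion u k c d.
Proof. by move=> ac bd; rewrite (funext ac) (funext bd). Qed.

Lemma profile_expansionD u v k a b c d :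
  profile_expansion u k a b -> profile_expansion v k c d ->
  profile_expansion (caddf u v) k (a + c) (b + d).
Proof.
move=> Eu Ev tau tauI eps e0; have e20 : 0 < eps / 2 by rewrite divr_gt0.
have [du [du0 Hu]] := Eu tau tauI _ e20; have [dv [dv0 Hv]] := Ev tau tauI _ e20.
exists (Num.min du dv); split=> [|r /andP[r0]]; first by rewrite lt_min du0.
rewrite lt_min => /andP[rdu rdv].
have [Hu1 Hu2] := Hu r ltac:(by rewrite r0). have [Hv1 Hv2] := Hv r ltac:(by rewrite r0).
rewrite (splitr eps); split.
- set f := (fun t => _); set g := (fun t => _) in Hu1; set h := (fun t => _) in Hv1.
  suff -> : f = g + h by exact: C1tau_smallD.
  by apply/funext => t; rewrite /f /g /h !fctE /caddf /=; ring.
- set f := (fun t => _); set g := (fun t => _) in Hu2; set h := (fun t => _) in Hv2.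
  suff -> : f = g + h by exact: C1tau_smallD.
  by apply/funext => t; rewrite /f /g /h !fctE /caddf /=; ring.
Qed.

Lemma profile_expansionN u k a b :
  profile_expansion u k a b -> profile_expansion (cnegf u) k (- a) (- b).
Proof.
move=> E tau tauI eps e0; have [d [d0 Hd]] := E tau tauI eps e0.
exists d; split=> // r /Hd[H1 H2]; split.
- set f := (fun t => _); set g := (fun t => _) in H1.
  suff -> : f = - g by exact: C1tau_smallN.
  by apply/funext => t; rewrite /f /g !fctE /cnegf /=; ring.
- set f := (fun t => _); set g := (fun t => _) in H2.
  suff -> : f = - g by exact: C1tau_smallN.
  by apply/funext => t; rewrite /f /g !fctE /cnegf /=; ring.
Qed.

Lemma profile_expansion_Sfrak u k a b : profile_expansion u k a b ->
  profile_expansion (Sfrak u) k (fun t => a (2 * pi - t)) (fun t => - b (2 * pi - t)).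
Proof.
move=> E tau tauI eps e0; have [d [d0 Hd]] := E tau tauI eps e0.
have polar_2pi_sub (r t : R) :
    sigma (r * cos t, r * sin t) = (r * cos (2 * pi - t), r * sin (2 * pi - t)).
  by rewrite /sigma /= cos2pi_sub sin2pi_sub mulrN.
exists d; split=> // r /Hd[H1 H2]; split.
- set f := (fun t => _); set g := (fun t => _) in H1.
  suff -> : f = g \o (fun t => 2 * pi - t) by exact: C1tau_small_2pi_sub.
  by apply/funext => t; rewrite /f /g /Sfrak polar_2pi_sub.
- set f := (fun t => _); set g := (fun t => _) in H2.
  suff -> : f = - (g \o (fun t => 2 * pi - t)) by exact/C1tau_smallN/C1tau_small_2pi_sub.
  by apply/funext => t; rewrite /f /g /Sfrak polar_2pi_sub !fctE /=; ring.
Qed.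

End ProfileExpansion.

Section Expansion.
Context {R : realType}.
Local Notation pt := (R * R)%type.
Implicit Types (u : pt -> R * R) (k : nat) (beta omega : R).

Lemma expansion_Sfrak u k beta omega : odd k ->
  expansion u k beta omega -> expansion (Sfrak u) k (- beta) (- omega).
Proof.
move=> ok /profile_expansion_Sfrak; apply: eq_profile_expansion => t.
  by rewrite cos_half_2pi_sub sin_odd_half_2pi_sub // opprK; ring.
by rewrite sin_half_2pi_sub sin_odd_half_2pi_sub // opprK; ring.
Qed.

Lemma expansion_sub_Sfrak u k beta omega : odd k -> expansion u k beta omega ->
  expansion (csubf u (Sfrak u)) k (2 * beta * cos (k%:R / 2 * omega)) 0.
Proof.
move=> ok E; have := profile_expansionD E (profile_expansionN (expansion_Sfrak ok E)).
apply: eq_profile_expansion => t; rewrite !fctE opprK subr0 mulrBr mulrDr sinB sinD; ring.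
Qed.

Lemma expansion_add_Sfrak u k beta omega : odd k -> expansion u k beta omega ->
  expansion (caddf u (Sfrak u)) k (2 * beta * sin (k%:R / 2 * omega)) (pi / k%:R).
Proof.
move=> ok E; have := profile_expansionD E (expansion_Sfrak ok E).
have kR : k%:R != 0 :> R by rewrite pnatr_eq0; case: (k) ok.
have sin_shift (t : R) : sin (k%:R / 2 * (t - pi / k%:R)) = - cos (k%:R / 2 * t).
  by rewrite -sinBpihalf; congr (sin _); field.
apply: eq_profile_expansion => t; rewrite !fctE sin_shift opprK mulrBr mulrDr sinB sinD; ring.
Qed.

Lemma open_polar_disk (Omega : set pt) : open Omega -> Omega (0, 0) ->
  exists2 e : R, 0 < e & forall r t, 0 < r < e -> Omega (r * cos t, r * sin t).
Proof.
move=> oO O0; have /nbhs_ballP[e e0 eO] := oO _ O0.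
exists e => // r t /andP[r0 re].
have in_ball (c : R) : -1 <= c <= 1 -> ball 0 e (r * c).
  move=> cI; rewrite /ball /= sub0r normrN normrM gtr0_norm // (le_lt_trans _ re) //.
  by rewrite ler_piMr ?(ltW r0) // ler_norml.
by apply: eO; split; apply: in_ball; rewrite ?cos_geN1 ?cos_le1 ?sin_geN1 ?sin_le1.
Qed.

Lemma polar_neq0 (r t : R) : 0 < r -> (r * cos t, r * sin t) <> (0, 0).
Proof.
move=> r0 [/eqP + /eqP]; rewrite !mulf_eq0 (gt_eqF r0) /= => /eqP c0 /eqP s0.
by have := cos2Dsin2 t; rewrite c0 s0 expr0n addr0 => /eqP; rewrite eq_sym oner_eq0.
Qed.

Lemma expansion_zero_on Omega u k beta omega :
  (0 < k)%N -> 0 <= omega -> omega <= pi / k%:R ->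
  open Omega -> Omega (0, 0) -> zero_on Omega u -> expansion u k beta omega -> beta = 0.
Proof.
move=> k0 w0 w1 oO O0 u0 E.
have [e e0 Oe] := open_polar_disk oO O0.
have kR : 1 <= k%:R :> R by rewrite ler1n.
pose t := omega + pi / k%:R.
have tI : 0 <= t <= 2 * pi.
  have : pi / k%:R <= pi :> R by rewrite ler_pdivrMr ?ler_peMr ?pi_ge0 // (lt_le_trans ltr01).
  by rewrite /t; have := @pi_gt0 R; lra.
have sin_t : sin (k%:R / 2 * (t - omega)) = 1.
  rewrite /t addrAC subrr add0r (_ : k%:R / 2 * (pi / k%:R) = pi / 2) ?sin_pihalf //.
  by field; rewrite pnatr_eq0 -lt0n.
have small (x : R) : (forall eps, 0 < eps -> `|x| <= eps) -> x = 0.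
  by move=> xe; apply/eqP; rewrite -normr_le0; apply/ler_addgt0Pr => eps /xe; rewrite add0r.
have [zc zs] : beta * cos (t / 2) = 0 /\ beta * sin (t / 2) = 0.
  suff bounds eps : 0 < eps -> `|beta * cos (t / 2)| <= eps /\ `|beta * sin (t / 2)| <= eps.
    by split; apply: small => eps /bounds[].
  move=> eps0; have [d [d0 Hd]] := E (1 / 2) ltac:(lra) eps eps0.
  have m0 : 0 < Num.min d e by rewrite lt_min d0.
  have md : Num.min d e <= d by rewrite ge_min lexx.
  have me : Num.min d e <= e by rewrite ge_min lexx orbT.
  pose r := Num.min d e / 2.
  have rI : 0 < r < d /\ 0 < r < e by rewrite /r; lra.
  have [[_ Hu1 _] [_ Hu2 _]] := Hd r rI.1.
  have ur : u (r * cos t, r * sin t) = (0, 0).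
    by apply: u0; [apply: Oe; exact: rI.2 | apply: polar_neq0; case/andP: rI.1].
  have [+ _] := Hu1 t tI; have [+ _] := Hu2 t tI.
  by rewrite ur sin_t /= mulr0 !sub0r !normrN !mulr1.
by rewrite -[beta]mulr1 -(cos2Dsin2 (t / 2)) mulrDr !expr2 !mulrA zc zs !mul0r addr0.
Qed.

End Expansion.

Unset Implicit Arguments.

Theorem lemma7p1 (R : realType) (Omega : set (R * R)) (lam : R)
    (phi : R * R -> R * R) (k : nat) (beta omega : R) :
  open Omega -> bounded_set Omega -> connected Omega -> Omega (0, 0) ->
  @sigma R @` Omega = Omega ->
  Eset Omega lam phi -> ~ zero_on Omega phi ->
  asym_data phi k beta omega ->
  [/\ (forall x, Omega x -> x <> (0, 0) -> phi x = cnegf (Sfrak phi) x) -> omega = 0,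
      (forall x, Omega x -> x <> (0, 0) -> phi x = Sfrak phi x) -> omega = pi / k%:R,
      omega <> pi / k%:R ->
        exists beta' omega', asym_data (csubf phi (Sfrak phi)) k beta' omega' &
      omega <> 0 ->
        exists beta' omega', asym_data (caddf phi (Sfrak phi)) k beta' omega'].
Proof.
move=> oO _ _ O0 _ _ _ [ok b0 wI E].
have k0 : (0 < k)%N by case: (k) ok.
have kR : 0 < k%:R :> R by rewrite ltr0n.
have b20 : 2 * beta != 0 by rewrite mulf_neq0 ?pnatr_eq0.
have pik0 : 0 <= (pi : R) / k%:R by rewrite divr_ge0 ?pi_ge0 ?ltW.
split=> [anti|sym|w_neq|w_neq].
- have vanish : zero_on Omega (caddf phi (Sfrak phi)).
    by move=> x Ox x0; rewrite /caddf (anti x Ox x0) /= !addNr.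
  have /eqP := expansion_zero_on k0 pik0 (lexx _) oO O0 vanish (expansion_add_Sfrak ok E).
  by rewrite mulf_eq0 (negbTE b20) sin_half_phase_eq0 // => /eqP.
- have vanish : zero_on Omega (csubf phi (Sfrak phi)).
    by move=> x Ox x0; rewrite /csubf /caddf /cnegf (sym x Ox x0) !subrr.
  have /eqP := expansion_zero_on k0 (lexx 0) pik0 oO O0 vanish (expansion_sub_Sfrak ok E).
  by rewrite mulf_eq0 (negbTE b20) cos_half_phase_eq0 // => /eqP.
- exists (2 * beta * cos (k%:R / 2 * omega)), 0; split=> //.
  + by rewrite mulf_neq0 // cos_half_phase_eq0 //; apply/eqP.
  + by rewrite lexx divr_gt0 ?mulr_gt0 ?pi_gt0.
  + exact: expansion_sub_Sfrak.
- exists (2 * beta * sin (k%:R / 2 * omega)), (pi / k%:R); split=> //.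
  + by rewrite mulf_neq0 // sin_half_phase_eq0 //; apply/eqP.
  + by rewrite pik0 ltr_pM2r ?invr_gt0 //; have := @pi_gt0 R; lra.
  + exact: expansion_add_Sfrak.
Qed.
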